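(* Let $\mathbb{F}$ be a field, $n\ge1$, $r\ge3$, and let $\mathcal{F},\mathcal{F}'$ be flags in $\mathbb{F}^n$ of length $r$ with $\mathrm{sig}(\mathcal{F})=(i_1,\dots,i_r)$ and $\mathrm{sig}(\mathcal{F}')=(j_1,\dots,j_r)$. If the semigroups $\varphi(\mathcal{F})$ and $\varphi(\mathcal{F}')$ are isomorphic, then $i_t=j_t$ for all $t=2,\dots,r-1$.
   Context: $M(n,\mathbb{F})$ is the semigroup of $n\times n$ matrices over $\mathbb{F}$, identified with linear operators on $\mathbb{F}^n$. A flag of length $r$ is a chain $0=V_0\subsetneq V_1\subsetneq\cdots\subsetneq V_r=\mathbb{F}^n$ of subspaces; its signature is $(d_1,\dots,d_r)$ with $d_i=\dim(V_i/V_{i-1})$. $\varphi(\mathcal{F})=\{a\in M(n,\mathbb{F}) : a(V_i)\subseteq V_{i-1}\text{ for all } i=1,\dots,r\}$. *)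

From HB Require Import structures.
From mathcomp Require Import all_boot all_order all_algebra.
Set Implicit Arguments. Unset Strict Implicit. Unset Printing Implicit Defensive.
Import GRing.Theory.
Local Open Scope ring_scope.

(* Subspaces of F^n are represented (mxalgebra style) by the row space of a
   square matrix in 'M[F]_n; vectors of F^n are column vectors and a matrix
   a acts on F^n by v |-> a *m v.  The image a(V) of the subspace spanned by
   the rows of V (as column vectors) is then spanned by the rows of V *m a^T. *)

Definition is_flag (F : fieldType) (n r : nat) (V : nat -> 'M[F]_n) : Prop :=
  V 0%N = 0 /\ (V r == (1%:M : 'M[F]_n))%MS /\
  (forall i : nat, (1 <= i <= r)%N -> (V i.-1 < V i)%MS).

Definition flag_sig (F : fieldType) (n : nat) (V : nat -> 'M[F]_n) (i : nat)
  : nat := (\rank (V i) - \rank (V i.-1))%N.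

Definition phi_flag (F : fieldType) (n r : nat) (V : nat -> 'M[F]_n)
  : pred 'M[F]_n :=
  [pred a | [forall i : 'I_r, (V i.+1 *m a^T <= V i)%MS]].

Definition semigroup_iso (F : fieldType) (n : nat) (S T : pred 'M[F]_n)
  : Prop :=
  exists f : 'M[F]_n -> 'M[F]_n,
    [/\ {in S, forall a, f a \in T},
        {in S &, injective f},
        (forall b, b \in T -> exists2 a, a \in S & f a = b) &
        {in S &, forall a b, f (a *m b) = f a *m f b}].

From HB Require Import structures.
From mathcomp Require Import all_boot all_order all_algebra.
From mathcomp Require Import zify.
From Stdlib Require Import ClassicalEpsilon.

Set Implicit Arguments. Unset Strict Implicit. Unset Printing Implicit Defensive.
Import GRing.Theory.
Local Open Scope ring_scope.

(* Everything is phrased inside the semigroup S = phi(V).  For t <= r the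
   elements y of S with s_1 ... s_t y = 0 for all s_i in S are exactly those
   with image in V_t.  Call y_0, ..., y_(k-1) separated when for each i some
   x in S kills y_0, ..., y_(i-1) but not y_i.  Every x in S kills V_1, so the
   images of a separated sequence with images in V_t form a strictly
   increasing chain of subspaces between V_1 and V_t; conversely, for t < r,
   rank-one maps built from a maximal such chain give a separated sequence of
   length dim V_t - dim V_1.  Both notions are preserved by semigroup
   isomorphisms, hence so is dim V_t - dim V_1 for 1 <= t < r, and d_t is the
   difference of two consecutive such invariants when 2 <= t <= r - 1. *)

Section LinearAlgebra.
Variables (F : fieldType) (n : nat).

Lemma separating_col m (U : 'M[F]_(m, n)) (v : 'rV[F]_n) :
  ~~ (v <= U)%MS -> exists2 c : 'cV[F]_n, (U <= kermx c)%MS & ~~ (v <= kermx c)%MS.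
Proof.
rewrite submxE => /matrix0Pn[i [j nz_vj]]; rewrite (ord1 i) in nz_vj.
exists (cokermx U *m delta_mx j 0); first by rewrite sub_kermx mulmxA mulmx_coker mul0mx.
rewrite sub_kermx; apply: contra_neq nz_vj => /matrixP/(_ 0 0).
by rewrite mulmxA -colE !mxE.
Qed.

Lemma mx11_neq0 (M : 'M[F]_1) : M != 0 -> M 0 0 != 0.
Proof. by apply: contra_neq => M00; rewrite [M]mx11_scalar M00 raddf0. Qed.

(* The map x |-> (c^T x) w^T; it is stored transposed because phi_flag tests a^T. *)
Definition rank_one (c : 'cV[F]_n) (w : 'rV[F]_n) : 'M[F]_n := (c *m w)^T.

Lemma rank_oneM c w c' w' :
  rank_one c w *m rank_one c' w' = (w' *m c) 0 0 *: rank_one c' w.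
Proof.
rewrite /rank_one -trmx_mul mulmxA -(mulmxA c') {1}[w' *m c]mx11_scalar.
by rewrite mul_mx_scalar -scalemxAl linearZ.
Qed.

Lemma rank_one_neq0 c w : c != 0 -> w != 0 -> rank_one c w != 0.
Proof. by move=> nz_c nz_w; rewrite trmx_eq0 mulmx_free_eq0 // /row_free rank_rV nz_w. Qed.

End LinearAlgebra.

Section PrefixSpan.
Variables (F : fieldType) (n m : nat) (B : 'M[F]_n) (u : nat -> 'M[F]_(m, n)).

Fixpoint prefix_span i : 'M[F]_n :=
  if i is i'.+1 then (prefix_span i' + u i')%MS else B.

Lemma prefix_span_sub (K : 'M[F]_n) i :
  (B <= K)%MS -> (forall j, (j < i)%N -> (u j <= K)%MS) -> (prefix_span i <= K)%MS.
Proof.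
elim: i => //= i IH sBK suK; rewrite addsmx_sub suK // andbT.
by apply: IH => // j ji; apply: suK; apply: ltnW.
Qed.

Lemma prefix_spanS i k : (i <= k)%N -> (prefix_span i <= prefix_span k)%MS.
Proof.
elim: k => [|k IH]; first by rewrite leqn0 => /eqP->.
rewrite leq_eqVlt ltnS => /orP[/eqP-> // | /IH sik].
exact: submx_trans sik (addsmxSl _ _).
Qed.

Lemma sub_prefix_span i : (B <= prefix_span i)%MS.
Proof. exact: (prefix_spanS (leq0n i)). Qed.

Lemma term_sub_prefix_span j i : (j < i)%N -> (u j <= prefix_span i)%MS.
Proof. by move=> ji; apply: submx_trans (addsmxSr _ _) (prefix_spanS ji). Qed.

Lemma mxrank_prefix_span_le k : (\rank (prefix_span k) <= \rank B + k * m)%N.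
Proof.
elim: k => [|k IH] /=; first by rewrite addn0.
apply: leq_trans (mxrank_adds_leqif _ _).1 _.
by rewrite mulSn addnCA addnC leq_add // rank_leq_row.
Qed.

Lemma mxrank_prefix_span_ge k :
  (forall i, (i < k)%N -> ~~ (u i <= prefix_span i)%MS) ->
  (\rank B + k <= \rank (prefix_span k))%N.
Proof.
elim: k => [|k IH] /= escape; first by rewrite addn0.
rewrite addnS; apply: leq_ltn_trans (IH _) (rank_ltmx _) => [i ik|].
  by apply: escape; apply: ltnW.
by rewrite ltmxE addsmxSl addsmx_sub submx_refl escape.
Qed.

End PrefixSpan.

Section GreedyChain.
Variables (F : fieldType) (n : nat) (B A : 'M[F]_n).

Definition greedy_row (U : 'M[F]_n) : 'rV[F]_n :=
  oapp (fun k => row k A) 0 [pick k | ~~ (row k A <= U)%MS].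

Fixpoint greedy_span i : 'M[F]_n :=
  if i is i'.+1 then (greedy_span i' + greedy_row (greedy_span i'))%MS else B.

Lemma greedy_row_sub U : (greedy_row U <= A)%MS.
Proof. by rewrite /greedy_row; case: pickP => [k _|_]; rewrite ?row_sub ?sub0mx. Qed.

Lemma greedy_row_notin U : ~~ (A <= U)%MS -> ~~ (greedy_row U <= U)%MS.
Proof.
rewrite /greedy_row; case: pickP => [k // | none] /row_subPn[k].
by rewrite none.
Qed.

Lemma exists_escaping_rows : exists u : nat -> 'rV[F]_n,
  (forall i, (u i <= A)%MS) /\
  (forall i, (i < \rank A - \rank B)%N -> ~~ (u i <= prefix_span B u i)%MS).
Proof.
pose u i := greedy_row (greedy_span i).
have spanE i : greedy_span i = prefix_span B u i by elim: i => //= i IH; rewrite -IH.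
exists u; split=> [i | i iAB]; first exact: greedy_row_sub.
rewrite -spanE; apply: greedy_row_notin; apply/negP => /mxrankS; rewrite spanE.
by have := mxrank_prefix_span_le B u i; rewrite muln1; lia.
Qed.

End GreedyChain.

Section SemigroupInvariants.
Variables (F : fieldType) (n : nat).

Fixpoint annihilated (S : pred 'M[F]_n) t (y : 'M[F]_n) : Prop :=
  if t is t'.+1 then forall s, s \in S -> annihilated S t' (s *m y) else y = 0.

Definition separated (S : pred 'M[F]_n) (P : 'M[F]_n -> Prop) k
    (y : nat -> 'M[F]_n) : Prop :=
  forall i, (i < k)%N ->
  [/\ y i \in S, P (y i) &
      exists2 x, x \in S &
        (forall j, (j < i)%N -> x *m y j = 0) /\ x *m y i != 0].

Lemma semigroup_iso_sym (S T : pred 'M[F]_n) :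
  {in S &, forall a b, a *m b \in S} ->
  semigroup_iso S T -> semigroup_iso T S.
Proof.
move=> mulS [f [fST finj fsurj fmul]].
pose g b := epsilon (inhabits 0) (fun a => a \in S /\ f a = b).
have gK b : b \in T -> g b \in S /\ f (g b) = b.
  move=> /fsurj[a Sa fa].
  by apply: (epsilon_spec _ (fun a => a \in S /\ f a = b)); exists a.
exists g; split=> [b /gK[] // | b b' Tb Tb' gbb' | a Sa | b b' Tb Tb'].
- by rewrite -(gK b Tb).2 -(gK b' Tb').2 gbb'.
- have [Sgfa fgfa] := gK _ (fST a Sa).
  by exists (f a); [exact: fST | apply: finj].
- have [Sgb fgb] := gK b Tb; have [Sgb' fgb'] := gK b' Tb'.
  have Tbb' : b *m b' \in T by rewrite -fgb -fgb' -fmul // fST // mulS.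
  have [Sgbb' fgbb'] := gK _ Tbb'.
  by apply: finj; rewrite ?mulS // fgbb' fmul // fgb fgb'.
Qed.

Section Isomorphism.
Variables (S T : pred 'M[F]_n) (f : 'M[F]_n -> 'M[F]_n).
Hypotheses (S0 : 0 \in S) (T0 : 0 \in T) (mulS : {in S &, forall a b, a *m b \in S}).
Hypotheses (fST : {in S, forall a, f a \in T}) (finj : {in S &, injective f}).
Hypothesis fsurj : forall b, b \in T -> exists2 a, a \in S & f a = b.
Hypothesis fmul : {in S &, forall a b, f (a *m b) = f a *m f b}.

Lemma iso0 : f 0 = 0.
Proof.
have [a Sa fa0] := fsurj T0.
by rewrite -{1}(mul0mx _ a) fmul // fa0 mulmx0.
Qed.

Lemma iso_eq0 y : y \in S -> (f y == 0) = (y == 0).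
Proof.
move=> Sy; apply/eqP/eqP => [fy0 | ->]; last exact: iso0.
by apply: finj => //; rewrite fy0 iso0.
Qed.

Lemma iso_annihilated t y :
  y \in S -> annihilated S t y <-> annihilated T t (f y).
Proof.
elim: t y => [|t IH] y Sy /=.
  by split=> [-> | /eqP]; [exact: iso0 | rewrite iso_eq0 // => /eqP].
split=> ann s Ts.
  have [a Sa <-] := fsurj Ts.
  by rewrite -fmul //; apply/IH; [exact: mulS | exact: ann].
by apply/(IH _ (mulS Ts Sy)); rewrite fmul //; apply: ann; exact: fST.
Qed.

Lemma iso_separated t k y :
  separated S (annihilated S t) k y -> separated T (annihilated T t) k (f \o y).
Proof.
move=> sep i ik; have [Syi ann [x Sx [kill nz]]] := sep i ik.
split=> /=; [exact: fST | exact/iso_annihilated | exists (f x); first exact: fST].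
split=> [j ji | ]; last by rewrite -fmul // iso_eq0 ?mulS.
have [Syj _ _] := sep j (ltn_trans ji ik).
by rewrite -fmul // kill // iso0.
Qed.

End Isomorphism.
End SemigroupInvariants.

Section FlagSemigroup.
Variables (F : fieldType) (n r : nat) (V : nat -> 'M[F]_n).
Hypothesis flagV : is_flag r V.
Local Notation S := (phi_flag r V).

Lemma phi_flagP a :
  reflect (forall i, (i < r)%N -> (V i.+1 *m a^T <= V i)%MS) (a \in S).
Proof.
by apply: (iffP forallP) => [phiA i ir | phiA i]; [exact: (phiA (Ordinal ir)) | exact: phiA].
Qed.

Lemma flag_sub i k : (i <= k <= r)%N -> (V i <= V k)%MS.
Proof.
case/andP; elim: k => [|k IH]; first by rewrite leqn0 => /eqP->.
rewrite leq_eqVlt ltnS => /orP[/eqP-> // | ik kr].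
by apply: submx_trans (IH ik (ltnW kr)) (ltmxW (flagV.2.2 k.+1 _)); rewrite kr.
Qed.

Lemma flag_step_row p : (p < r)%N -> exists k, ~~ (row k (V p.+1) <= V p)%MS.
Proof. by move=> pr; apply/row_subPn; have /andP[] := flagV.2.2 p.+1 pr. Qed.

Lemma phi_flag0 : 0 \in S.
Proof. by apply/phi_flagP => i _; rewrite trmx0 mulmx0 sub0mx. Qed.

Lemma phi_flagM : {in S &, forall a b, a *m b \in S}.
Proof.
move=> a b /phi_flagP phiA /phi_flagP phiB; apply/phi_flagP => i ir.
rewrite trmx_mul mulmxA; apply: submx_trans (submxMr _ (phiB i ir)) _.
case: i ir => [|i] ir; first by rewrite flagV.1 mul0mx sub0mx.
by apply: submx_trans (phiA i (ltnW ir)) (flag_sub _); rewrite leqnSn ltnW.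
Qed.

Lemma rank_one_phi_flag p c w :
  (p <= r)%N -> (V p <= kermx c)%MS -> (w <= V p)%MS -> rank_one c w \in S.
Proof.
move=> pr Vc wV; apply/phi_flagP => i ir; rewrite trmxK mulmxA.
case: (leqP i.+1 p) => [ip | pi].
  have /sub_kermxP-> : (V i.+1 <= kermx c)%MS.
    by rewrite (submx_trans _ Vc) // flag_sub // ip.
  by rewrite mul0mx sub0mx.
apply: submx_trans (submxMl _ _) (submx_trans wV (flag_sub _)).
by rewrite -ltnS pi ltnW.
Qed.

Lemma phi_flag_moves_out m t (A : 'M[F]_(m, n)) :
  (t < r)%N -> ~~ (A <= V t.+1)%MS -> exists2 s, s \in S & ~~ (A *m s^T <= V t)%MS.
Proof.
move=> tr /row_subPn[i Ai]; have [c Vc Aic] := separating_col Ai.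
have [k Vk] := flag_step_row tr.
exists (rank_one c (row k (V t.+1))); first by rewrite (rank_one_phi_flag tr) ?row_sub.
apply: contra Vk => /(submx_trans (row_sub i _)).
rewrite row_mul trmxK mulmxA [row i A *m c]mx11_scalar mul_scalar_mx.
by rewrite eqmx_scale // mx11_neq0 // -sub_kermx.
Qed.

Lemma annihilated_phi_flag t y :
  (t <= r)%N -> y \in S -> annihilated S t y <-> (y^T <= V t)%MS.
Proof.
elim: t y => [|t IH] y tr Sy /=.
  by rewrite flagV.1 submx0 trmx_eq0; split=> [-> | /eqP].
split=> [ann | yV s Ss]; last first.
  rewrite (IH _ (ltnW tr) (phi_flagM Ss Sy)) trmx_mul.
  exact: submx_trans (submxMr _ yV) (elimT (phi_flagP _) Ss t tr).
apply/negPn/negP => /(phi_flag_moves_out tr)[s Ss]; case/negP.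
by rewrite -trmx_mul; apply/(IH _ (ltnW tr) (phi_flagM Ss Sy)); apply: ann.
Qed.

Lemma separated_phi_flag_le t k y :
  (1 <= t <= r)%N -> separated S (annihilated S t) k y ->
  (k <= \rank (V t) - \rank (V 1))%N.
Proof.
move=> /andP[t1 tr] sep_y; pose u j := (y j)^T.
have escape i : (i < k)%N -> ~~ (u i <= prefix_span (V 1) u i)%MS.
  move=> ik; have [_ _ [x Sx [kill nz]]] := sep_y i ik.
  have ker_x : (prefix_span (V 1) u i <= kermx x^T)%MS.
    apply: prefix_span_sub => [|j ji]; last by rewrite sub_kermx -trmx_mul kill ?trmx0.
    (* x maps V 1 into V 0 = 0 *)
    by rewrite sub_kermx -submx0 -flagV.1 (elimT (phi_flagP _) Sx 0) // (leq_trans t1 tr).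
  by apply: contra nz => /submx_trans/(_ ker_x); rewrite sub_kermx -trmx_mul trmx_eq0.
have span_Vt : (prefix_span (V 1) u k <= V t)%MS.
  apply: prefix_span_sub => [|j jk]; first by rewrite flag_sub // t1.
  by have [Syj ann_j _] := sep_y j jk; apply/annihilated_phi_flag.
by have := mxrankS span_Vt; have := mxrank_prefix_span_ge escape; lia.
Qed.

Lemma exists_separated_phi_flag t :
  (1 <= t < r)%N ->
  exists y, separated S (annihilated S t) (\rank (V t) - \rank (V 1)) y.
Proof.
move=> /andP[t1 tr].
have [c Vc nz_c] : exists2 c : 'cV[F]_n, (V r.-1 <= kermx c)%MS & c != 0.
  have [k /separating_col[c Vc nVc]] := flag_step_row (ltac:(lia) : (r.-1 < r)%N).
  by exists c => //; apply: contraNneq nVc => ->; rewrite sub_kermx mulmx0.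
have [w wV nz_w] : exists2 w : 'rV[F]_n, (w <= V 1)%MS & w != 0.
  have [k Vk] := flag_step_row (ltac:(lia) : (0 < r)%N).
  by exists (row k (V 1)); rewrite ?row_sub //; apply: contraNneq Vk => ->; rewrite sub0mx.
have [u [uV escape]] := exists_escaping_rows (V 1) (V t).
exists (fun i => rank_one c (u i)) => i iD.
have Sy : rank_one c (u i) \in S.
  apply: (rank_one_phi_flag (leq_pred r) Vc); apply: submx_trans (uV i) (flag_sub _).
  by rewrite leq_pred andbT -ltnS prednK ?(leq_ltn_trans _ tr).
split; [exact: Sy | apply/(annihilated_phi_flag (ltnW tr) Sy) | ].
  by rewrite trmxK (submx_trans (submxMl _ _) (uV i)).
have [lam span_lam nlam] := separating_col (escape i iD).
exists (rank_one lam w).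
  apply: (rank_one_phi_flag (leq_trans t1 (ltnW tr))) wV.
  exact: submx_trans (sub_prefix_span _ _ _) span_lam.
split=> [j ji|]; rewrite rank_oneM.
  have /sub_kermxP-> := submx_trans (term_sub_prefix_span (V 1) u ji) span_lam.
  by rewrite mxE scale0r.
by rewrite scaler_eq0 negb_or rank_one_neq0 // andbT mx11_neq0 // -sub_kermx.
Qed.

End FlagSemigroup.

Lemma flag_height_le_of_iso (F : fieldType) (n r : nat) (V W : nat -> 'M[F]_n) u :
  is_flag r V -> is_flag r W -> semigroup_iso (phi_flag r V) (phi_flag r W) ->
  (1 <= u < r)%N -> (\rank (V u) - \rank (V 1) <= \rank (W u) - \rank (W 1))%N.
Proof.
move=> flagV flagW [f [fST finj fsurj fmul]] /andP[u1 ur].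
have [y sep_y] := exists_separated_phi_flag flagV (introT andP (conj u1 ur)).
apply: (separated_phi_flag_le flagW (introT andP (conj u1 (ltnW ur)))).
exact: (iso_separated (phi_flag0 _ _) (phi_flag0 _ _) (phi_flagM flagV)
  fST finj fsurj fmul sep_y).
Qed.

Lemma flag_sig_height (F : fieldType) (n r : nat) (V : nat -> 'M[F]_n) t :
  is_flag r V -> (2 <= t <= r)%N ->
  flag_sig V t = (\rank (V t) - \rank (V 1) - (\rank (V t.-1) - \rank (V 1)))%N.
Proof.
move=> flagV /andP[t2 tr].
have le1 := mxrankS (flag_sub flagV (i := 1) (k := t.-1) ltac:(lia)).
have le2 := mxrankS (flag_sub flagV (i := t.-1) (k := t) ltac:(lia)).
by rewrite /flag_sig; lia.
Qed.

Theorem proposition16 (F : fieldType) (n r : nat) (V W : nat -> 'M[F]_n) :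
  (1 <= n)%N -> (3 <= r)%N ->
  is_flag r V -> is_flag r W ->
  semigroup_iso (phi_flag r V) (phi_flag r W) ->
  forall t : nat, (2 <= t <= r.-1)%N -> flag_sig V t = flag_sig W t.
Proof.
move=> _ _ flagV flagW isoVW t /andP[t2 tr].
have isoWV := semigroup_iso_sym (phi_flagM flagV) isoVW.
have heightE u : (1 <= u < r)%N ->
    (\rank (V u) - \rank (V 1))%N = (\rank (W u) - \rank (W 1))%N.
  move=> ur; apply/eqP; rewrite eqn_leq.
  by rewrite (flag_height_le_of_iso flagV flagW isoVW ur)
             (flag_height_le_of_iso flagW flagV isoWV ur).
have t2r : (2 <= t <= r)%N by lia.
by rewrite (flag_sig_height flagV t2r) (flag_sig_height flagW t2r) !heightE //; lia.
Qed.
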